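(* Let $X\in\mathbb R^{n\times p}$ have unit $\ell_2$-norm columns and coherence $\mu$. Let $T_0\subset\{1,\dots,p\}$ with $|T_0|=s_0$, let $\lambda_1\ge\dots\ge\lambda_{s_0}$ be the $s_0$ largest eigenvalues of $X_{T_0}X_{T_0}^t$, and let $\tilde\lambda_1\ge\lambda_1$, $\tilde\lambda_{s_0}\le\lambda_{s_0}$. Let $T_1\subset\{1,\dots,p\}$ with $|T_1|=s_1=3s_0$ and $T_0\cap T_1=\emptyset$, and let $\eta=\tfrac12$. Set $$ \varepsilon_{\min}=\frac14\cdot\frac{s_0^3\mu^2/4+s_0^{3/2}\mu}{1-s_0\mu^2-\tfrac12},\qquad \varepsilon_{\max}=\frac14\cdot\frac{144\,s_0^4\mu^2+32\,s_0^{3/2}\mu(2-\eta)^2}{\tilde\lambda_1-1}. $$ Assume (1) $1-(s_0+s_1)\mu>\tilde\lambda_{s_0}>\eta$; (2) $1<\tilde\lambda_1<2-\eta$; (3) $s_1<\min\left(\frac{\tilde\lambda_{s_0}-\eta}{\varepsilon_{\min}},\frac{2-\eta-\tilde\lambda_1}{\varepsilon_{\max}}\right)$; and $$ \mu\le\min\left\{\frac{1}{\sqrt{288\,s_0^{5/2}(2s_0^{3/2}+1)}},\ \frac{1}{\sqrt{\tfrac32 s_0^4+6s_0^{5/2}+2s_0}}\right\}. $$ Then $$ \lambda_1\big(X_{T_0\cup T_1}^tX_{T_0\cup T_1}\big)\le\tilde\lambda_1+3s_0\varepsilon_{\max}\quad\text{and}\quad \lambda_{s_0+s_1}\big(X_{T_0\cup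 T_1}^tX_{T_0\cup T_1}\big)\ge\tilde\lambda_{s_0}-3s_0\varepsilon_{\min}. $$
   Context: $\mu=\max_{k<l}|\langle X_k,X_l\rangle|$ is the coherence of $X$, $X_T$ the submatrix with columns indexed by $T$, and $\lambda_k(A)$ the $k$-th largest eigenvalue of a symmetric matrix $A$. *)

From HB Require Import structures.
From mathcomp Require Import all_boot all_order all_algebra.
Set Implicit Arguments. Unset Strict Implicit. Unset Printing Implicit Defensive.
Import Order.TTheory GRing.Theory Num.Theory.
Local Open Scope ring_scope.

(* Submatrix X_T: the columns of X indexed by T (in increasing order). *)
Definition colsubT (R : Type) (n p : nat) (X : 'M[R]_(n, p)) (T : {set 'I_p})
  : 'M[R]_(n, #|T|) := \matrix_(i < n, j < #|T|) X i (enum_val j).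

Definition unit_columns (R : rcfType) (n p : nat) (X : 'M[R]_(n, p)) : Prop :=
  forall j : 'I_p, \sum_(i < n) (X i j) ^+ 2 = 1.

Definition col_dot (R : rcfType) (n p : nat) (X : 'M[R]_(n, p)) (k l : 'I_p) : R :=
  \sum_(i < n) X i k * X i l.

(* Coherence mu = max_{k<l} |<X_k, X_l>|  (0 if there are no such pairs). *)
Definition coherence (R : rcfType) (n p : nat) (X : 'M[R]_(n, p)) : R :=
  \big[Num.max/0]_(k < p) \big[Num.max/0]_(l < p | (k < l)%N) `|col_dot X k l|.

(* s is the list of eigenvalues of A (with multiplicity), sorted in
   nonincreasing order: lambda_k(A) = s`_(k-1). *)
Definition is_eigseq (R : rcfType) (m : nat) (A : 'M[R]_m) (s : seq R) : Prop :=
  [/\ size s = m, sorted (fun x y : R => y <= x) s &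
      char_poly A = \prod_(x <- s) ('X - x%:P)].

Definition pow32 (R : rcfType) (s : nat) : R := s%:R * Num.sqrt (s%:R).

Definition eps_min (R : rcfType) (s0 : nat) (mu : R) : R :=
  4^-1 * ((s0%:R ^+ 3 * mu ^+ 2 / 4 + pow32 R s0 * mu)
          / (1 - s0%:R * mu ^+ 2 - 2^-1)).

Definition eps_max (R : rcfType) (s0 : nat) (mu eta lt1 : R) : R :=
  4^-1 * ((144 * s0%:R ^+ 4 * mu ^+ 2 + 32 * pow32 R s0 * mu * (2 - eta) ^+ 2)
          / (lt1 - 1)).

(** Hypothesis (1) alone already forces [4 s0 mu < 1/2].  Every Gram matrix
    [X_T^t X_T] has unit diagonal and off-diagonal entries bounded by the
    coherence, so by Gershgorin's theorem all eigenvalues of the [4 s0]-column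
    Gram matrix of [T0 :|: T1] lie within [4 s0 mu] of [1].  The lower bound is
    then hypothesis (1) itself, and the upper bound follows because the term
    [s0^(3/2) mu] of [eps_max] outweighs [4 s0 mu] once multiplied by
    [lt1 - 1]. *)

From HB Require Import structures.
From mathcomp Require Import all_boot all_order all_algebra.
From mathcomp Require Import ring lra.
Set Implicit Arguments. Unset Strict Implicit. Unset Printing Implicit Defensive.
Import Order.TTheory GRing.Theory Num.Theory.
Local Open Scope ring_scope.

Section Gershgorin.
Variable R : realFieldType.

Lemma eigenvalue_norm_le (m : nat) (D : 'M[R]_m) (mu a : R) :
  (forall i j, `|D i j| <= mu) -> eigenvalue D a -> `|a| <= m%:R * mu.
Proof.
move=> HD /eigenvalueP[v Dv vN0].
have [i0 vi0N0] : exists i0, v 0 i0 != 0.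
  apply/existsP; apply: contraR vN0; rewrite negb_exists => /forallP v0.
  by apply/eqP/matrixP => r j; rewrite (ord1 r) mxE; exact/eqP/negPn/v0.
have [i _ vi_max] := @arg_maxP _ _ _ i0 xpredT (fun i => `|v 0 i|) isT.
have vi_gt0 : 0 < `|v 0 i| by apply: lt_le_trans (vi_max i0 isT); rewrite normr_gt0.
have Dv_i : \sum_j v 0 j * D j i = a * v 0 i.
  by have := congr1 (fun M : 'rV_m => M 0 i) Dv; rewrite !mxE.
rewrite -(ler_pM2l vi_gt0) -normrM (mulrC _ a) -Dv_i.
apply: le_trans (ler_norm_sum _ _ _) _.
apply: le_trans (_ : \sum_(j < m) `|v 0 i| * mu <= _); last first.
  by rewrite sumr_const card_ord -mulrnAr mulr_natl.
by apply: ler_sum => j _; rewrite normrM; apply: ler_pM => //; exact: vi_max.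
Qed.

Lemma eigenvalue_near1 (m : nat) (G : 'M[R]_m) (mu x : R) :
  (forall i j, `|G i j - (i == j)%:R| <= mu) -> eigenvalue G x ->
  `|x - 1| <= m%:R * mu.
Proof.
move=> HG /eigenvalueP[v Gv vN0]; apply: (@eigenvalue_norm_le _ (G - 1%:M)).
  by move=> i j; rewrite !mxE.
by apply/eigenvalueP; exists v; rewrite // mulmxBr mulmx1 Gv scalerBl scale1r.
Qed.

End Gershgorin.

Lemma eigenvalue0 (F : fieldType) (m : nat) (a : F) :
  eigenvalue (0 : 'M_m) a -> a = 0.
Proof.
case/eigenvalueP=> v; rewrite mulmx0 => /esym/eqP.
by rewrite scaler_eq0 => /orP[/eqP // | ->].
Qed.

Section Eigseq.
Variable R : rcfType.

Lemma is_eigseq_eigenvalue (m : nat) (A : 'M[R]_m) (s : seq R) (x : R) :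
  is_eigseq A s -> x \in s -> eigenvalue A x.
Proof. by case=> _ _ charA; rewrite eigenvalue_root_char charA root_prod_XsubC. Qed.

Lemma is_eigseq0_nth (m : nat) (s : seq R) (k : nat) :
  is_eigseq (0 : 'M[R]_m) s -> s`_k = 0.
Proof.
move=> s_eig; have [k_lt|k_ge] := ltnP k (size s); last by rewrite nth_default.
exact: eigenvalue0 (is_eigseq_eigenvalue s_eig (mem_nth 0 k_lt)).
Qed.

End Eigseq.

Section Coherence.
Variables (R : rcfType) (n p : nat) (X : 'M[R]_(n, p)).

Lemma coherence_ge0 : 0 <= coherence X.
Proof. exact: bigmax_ge_id. Qed.

Lemma col_dotC (k l : 'I_p) : col_dot X k l = col_dot X l k.
Proof. by apply: eq_bigr => i _; rewrite mulrC. Qed.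

Lemma col_dot_le_coherence (k l : 'I_p) : k != l -> `|col_dot X k l| <= coherence X.
Proof.
have lt_le (k' l' : 'I_p) : (k' < l')%N -> `|col_dot X k' l'| <= coherence X.
  move=> kl; apply: le_trans (le_bigmax _ _ k').
  exact: (le_bigmax_cond _ (fun l => `|col_dot X k' l|) kl).
by rewrite neq_ltn => /orP[/lt_le // | /lt_le]; rewrite col_dotC.
Qed.

Lemma gram_colsubT (T : {set 'I_p}) (i j : 'I_#|T|) :
  ((colsubT X T)^T *m colsubT X T) i j = col_dot X (enum_val i) (enum_val j).
Proof. by rewrite mxE; apply: eq_bigr => k _; rewrite !mxE. Qed.

Lemma gram_colsubT_near1 (T : {set 'I_p}) (i j : 'I_#|T|) :
  unit_columns X ->
  `|((colsubT X T)^T *m colsubT X T) i j - (i == j)%:R| <= coherence X.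
Proof.
move=> unitX; rewrite gram_colsubT; case: eqVneq => [<-|ij].
  rewrite /col_dot (eq_bigr (fun k => X k (enum_val i) ^+ 2)) => [|k _]; last exact: expr2.
  by rewrite unitX subrr normr0 coherence_ge0.
by rewrite subr0 col_dot_le_coherence // (inj_eq enum_val_inj).
Qed.

Lemma gram_eigseq_near1 (T : {set 'I_p}) (s : seq R) (x : R) :
  unit_columns X -> is_eigseq ((colsubT X T)^T *m colsubT X T) s -> x \in s ->
  `|x - 1| <= #|T|%:R * coherence X.
Proof.
move=> unitX s_eig xs; apply: eigenvalue_near1 (is_eigseq_eigenvalue s_eig xs).
by move=> i j; apply: gram_colsubT_near1.
Qed.

Lemma colsubT_outer_set0 (T : {set 'I_p}) :
  #|T| = 0%N -> colsubT X T *m (colsubT X T)^T = 0.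
Proof.
move=> T0; apply/matrixP => i j; rewrite !mxE big1 // => k _.
by have := ltn_ord k; rewrite {2}T0.
Qed.

End Coherence.

Section Bounds.
Variable R : rcfType.

Lemma eps_min_ge0 (s0 : nat) (mu : R) : (0 < s0)%N -> 0 <= mu ->
  4 * s0%:R * mu < 2^-1 -> 0 <= eps_min s0 mu.
Proof.
move=> s0_gt0 mu_ge0 small; have s0_ge1 : 1 <= s0%:R :> R by rewrite ler1n.
have mu_le : mu <= s0%:R * mu by rewrite ler_peMl.
rewrite /eps_min /pow32; apply: mulr_ge0; first lra.
apply: divr_ge0; last nra.
by apply: addr_ge0; repeat first [apply: exprn_ge0 | apply: mulr_ge0]; rewrite ?sqrtr_ge0 ?invr_ge0 ?ler0n.
Qed.

Lemma eps_max_ge0 (s0 : nat) (mu eta lt1 : R) :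
  0 <= mu -> 1 < lt1 -> 0 <= eps_max s0 mu eta lt1.
Proof.
move=> mu_ge0 lt1_gt1; rewrite /eps_max /pow32; apply: mulr_ge0; first lra.
apply: divr_ge0; last lra.
by apply: addr_ge0; repeat first [exact: sqr_ge0 | apply: exprn_ge0 | apply: mulr_ge0]; rewrite ?sqrtr_ge0 ?ler0n.
Qed.

Lemma le_add_of_small (a t e : R) :
  0 < a -> t < 2^-1 -> 0 <= e -> t <= 2 * (e * a) -> t <= a + e.
Proof. by move=> *; nra. Qed.

(* [3 s0 eps_max (lt1 - 1) = 108 s0^5 mu^2 + 54 s0^(5/2) mu >= 54 s0 mu]. *)
Lemma le_eps_max (s0 : nat) (mu lt1 : R) : (0 < s0)%N -> 0 <= mu -> 1 < lt1 ->
  4 * s0%:R * mu < 2^-1 -> 1 + 4 * s0%:R * mu <= lt1 + 3 * s0%:R * eps_max s0 mu 2^-1 lt1.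
Proof.
move=> s0_gt0 mu_ge0 lt1_gt1 small.
have s0_ge1 : 1 <= s0%:R :> R by rewrite ler1n.
have sqrt_ge1 : 1 <= Num.sqrt (s0%:R : R) by have := ler_wsqrtr s0_ge1; rewrite sqrtr1.
have pow32_ge1 : 1 <= pow32 R s0 by rewrite /pow32; nra.
have emax_ge0 := eps_max_ge0 s0 2^-1 mu_ge0 lt1_gt1.
suff : 4 * s0%:R * mu <= lt1 - 1 + 3 * s0%:R * eps_max s0 mu 2^-1 lt1 by lra.
apply: le_add_of_small => //; [lra | nra |].
have -> : 3 * s0%:R * eps_max s0 mu 2^-1 lt1 * (lt1 - 1)
    = 108 * s0%:R ^+ 5 * mu ^+ 2 + 54 * s0%:R * pow32 R s0 * mu.
  by rewrite /eps_max; field; rewrite subr_eq0 gt_eqF.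
have quad_ge0 : 0 <= s0%:R ^+ 5 * mu ^+ 2 by apply: mulr_ge0; apply: exprn_ge0; lra.
have lin_le : s0%:R * mu <= s0%:R * pow32 R s0 * mu.
  by rewrite -mulrA ler_wpM2l ?ler_peMl //; lra.
have s0mu_ge0 : 0 <= s0%:R * mu by apply: mulr_ge0; lra.
lra.
Qed.

End Bounds.

Theorem mainTheorem5 (R : rcfType) (n p : nat) (X : 'M[R]_(n, p))
  (T0 T1 : {set 'I_p}) (lt1 lts0 : R) (l0 l : seq R) :
  unit_columns X ->
  #|T1| = (3 * #|T0|)%N ->
  [disjoint T0 & T1] ->
  is_eigseq (colsubT X T0 *m (colsubT X T0)^T) l0 ->
  l0`_0 <= lt1 ->
  lts0 <= l0`_(#|T0|.-1) ->
  is_eigseq ((colsubT X (T0 :|: T1))^T *m colsubT X (T0 :|: T1)) l ->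
  let s0 := #|T0| in
  let s1 := #|T1| in
  let mu := coherence X in
  let eta : R := 2^-1 in
  let emin := eps_min s0 mu in
  let emax := eps_max s0 mu eta lt1 in
  lts0 < 1 - (s0 + s1)%:R * mu -> eta < lts0 ->
  1 < lt1 -> lt1 < 2 - eta ->
  s1%:R < Num.min ((lts0 - eta) / emin) ((2 - eta - lt1) / emax) ->
  mu <= Num.min
          (Num.sqrt (288 * (s0%:R ^+ 2 * Num.sqrt s0%:R) * (2 * pow32 R s0 + 1)))^-1
          (Num.sqrt (3 / 2 * s0%:R ^+ 4 + 6 * (s0%:R ^+ 2 * Num.sqrt s0%:R)
                     + 2 * s0%:R))^-1 ->
  l`_0 <= lt1 + 3 * s0%:R * emax /\
  l`_((s0 + s1).-1) >= lts0 - 3 * s0%:R * emin.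
Proof.
move=> unitX s1E disj l0_eig _ lts0_le l_eig s0 s1 mu eta emin emax.
move=> gap lts0_gt lt1_gt1 _ _ _; rewrite /eta in lts0_gt.
have s0_gt0 : (0 < s0)%N.
  rewrite lt0n; apply/negP => /eqP s0_0; move: lts0_le.
  by rewrite colsubT_outer_set0 // in l0_eig; rewrite (is_eigseq0_nth _ l0_eig); lra.
have cardU : #|T0 :|: T1| = (s0 + s1)%N by apply/eqP; rewrite (leq_card_setU T0 T1).2.
have card4 : (s0 + s1)%:R = 4 * s0%:R :> R by rewrite /s1 s1E -mulSn natrM.
have near1 k : (k < s0 + s1)%N -> `|l`_k - 1| <= 4 * s0%:R * mu.
  move=> k_lt; rewrite -card4 -cardU; apply: (gram_eigseq_near1 unitX l_eig).
  by case: l_eig => size_l _ _; rewrite mem_nth // size_l cardU.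
have mu_ge0 : 0 <= mu := coherence_ge0 X.
have small : 4 * s0%:R * mu < 2^-1 by rewrite -card4; lra.
have s01_gt0 : (0 < s0 + s1)%N by rewrite addn_gt0 s0_gt0.
split.
  have := near1 _ s01_gt0; rewrite ler_norml => /andP[_].
  by have := le_eps_max s0_gt0 mu_ge0 lt1_gt1 small; rewrite /emax /eta; lra.
have last_lt : ((s0 + s1).-1 < s0 + s1)%N by rewrite ltn_predL.
have := near1 _ last_lt; rewrite ler_norml => /andP[last_ge _].
have : 0 <= 3 * s0%:R * emin by rewrite -mulrA mulr_ge0 // mulr_ge0 ?eps_min_ge0.
by rewrite card4 in gap; lra.
Qed.
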